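(* Let $r\ge 1$ and let $\epsilon,\xi_1,\dots,\xi_{r+1},p_1,\dots,p_{r+1},a_1,\dots,a_{r+1}$ be indeterminates. Put $s_i(z)=z-p_i$, $\Lambda(z)=\prod_{i=1}^{r+1}(z-a_i)$, and let $\mathrm{Wr}$ denote the relations (coefficientwise in $z$) $$\frac{\det_{1\le i,j\le r+1}\big[\xi_i^{j-1}\,s_i(z+\epsilon(j-1))\big]}{\det_{1\le i,j\le r+1}\big[\xi_i^{j-1}\big]}=\Lambda(z).$$ Define ${\rm Fun}(\epsilon{\rm Op}_Z^{\Lambda})=\mathbb{C}(\epsilon,\xi_i,p_i,a_i)/\mathrm{Wr}$. Let $m=(m_{ij})_{i,j=1}^{r+1}$ be the trigonometric Calogero–Moser Lax matrix $$m_{ii}=p_i-\epsilon\,\xi_i\sum_{k\neq i}\frac{1}{\xi_i-\xi_k},\qquad m_{ij}=\frac{\epsilon\,\xi_i}{\xi_i-\xi_j}\,\frac{\prod_{k\neq i}(\xi_i-\xi_k)}{\prod_{k\neq j}(\xi_j-\xi_k)}\ (i\neq j),$$ and define the tCM Hamiltonians $H^{tCM}_k(\epsilon,\{\xi_i\},\{p_i\})$ by $\det(z-m)=\sum_k H^{tCM}_k z^k$. Then there is an isomorphism of algebras $${\rm Fun}(\epsilon{\rm Op}_Z^{\Lambda})\cong \mathbb{C}(\epsilon,\xi_i,p_i,a_i)\big/\big(\text{relations } \det(z-m)=\Lambda(z)\text{ coefficientwise in } z\big).$$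
   Context: This algebra is the algebra of functions on the space of canonical $Z$-twisted Miura $(SL(r+1),\epsilon)$-opers on $\mathbb{P}^1$ (with $Z=\mathrm{diag}(\xi_1,\dots,\xi_{r+1})$ regular semisimple, and regular singularities exactly at the distinct roots $a_i$ of $\Lambda$); for such opers the section of the line subbundle has components $s_i(z)=z-p_i$ and the only defining relation is the $\epsilon$-shifted twisted Wronskian condition $\mathrm{Wr}$ above. *)

From HB Require Import structures.
From mathcomp Require Import all_boot all_order all_algebra.
Set Implicit Arguments. Unset Strict Implicit. Unset Printing Implicit Defensive.
Import Order.TTheory GRing.Theory Num.Theory.
Local Open Scope ring_scope.

Definition in_ideal (R : comRingType) (f : nat -> R) (N : nat) (x : R) : Prop :=
  exists c : nat -> R, x = \sum_(k < N) c k * f k.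

Definition Lambda (R : comRingType) (n : nat) (a : 'I_n -> R) : {poly R} :=
  \prod_(i < n) ('X - (a i)%:P).

(* Vandermonde-type matrix [xi_i^(j-1)] (0-indexed: xi_i^j) *)
Definition vdm (R : comRingType) (n : nat) (xi : 'I_n -> R) : 'M[R]_n :=
  \matrix_(i, j) (xi i ^+ j).

(* Matrix [xi_i^(j-1) s_i(z + eps (j-1))] with s_i(z) = z - p_i, 0-indexed *)
Definition twWr_mx (R : comRingType) (n : nat) (eps : R) (xi p : 'I_n -> R)
  : 'M[{poly R}]_n :=
  \matrix_(i, j) ((xi i ^+ j)%:P * ('X + (eps * j%:R - p i)%:P)).

Definition twWr (R : comUnitRingType) (n : nat) (eps : R) (xi p : 'I_n -> R)
  : {poly R} :=
  (\det (vdm xi))^-1 *: \det (twWr_mx eps xi p).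

Definition tCM_Lax (R : comUnitRingType) (n : nat) (eps : R) (xi p : 'I_n -> R)
  : 'M[R]_n :=
  \matrix_(i, j)
    (if i == j then p i - eps * xi i * \sum_(k < n | k != i) (xi i - xi k)^-1
     else eps * xi i / (xi i - xi j)
          * (\prod_(k < n | k != i) (xi i - xi k))
          / (\prod_(k < n | k != j) (xi j - xi k))).

Definition Wr_rel (R : comUnitRingType) (n : nat) (eps : R) (xi p a : 'I_n -> R)
  : nat -> R :=
  fun k => (twWr eps xi p - Lambda a)`_k.

Definition tCM_rel (R : comUnitRingType) (n : nat) (eps : R) (xi p a : 'I_n -> R)
  : nat -> R :=
  fun k => (char_poly (tCM_Lax eps xi p) - Lambda a)`_k.

(** The twisted Wronskian matrix factors as [(z - M) V], where [V] is the
   Vandermonde matrix [xi_i ^ j] and [M = diag p - eps diag xi D], with [D]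
   the matrix of the derivation in the Lagrange basis at the nodes [xi]:
   indeed [(D V)_ij = j xi_i^(j-1)] because [z^j] is interpolated exactly by
   the Lagrange basis.  Hence the normalised Wronskian is [det (z - M)].
   Computing [D] explicitly, [M] agrees with the transpose of the tCM Lax
   matrix up to off-diagonal factors [a_i b_j] versus [b_i a_j]; these cancel
   along every cycle of a permutation, so both characteristic polynomials
   coincide and the two families of relations are literally the same. *)

From HB Require Import structures.
From mathcomp Require Import all_boot all_order all_algebra.
From mathcomp Require Import fingroup perm ring.
Set Implicit Arguments. Unset Strict Implicit. Unset Printing Implicit Defensive.
Import GRing.Theory.
Local Open Scope ring_scope.

Section OffdiagonalRescaling.
Variables (R : comPzRingType) (n : nat).

Lemma prod_perm_moved (s : 'S_n) (c : 'I_n -> R) :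
  \prod_(i < n) (if s i == i then 1 else c (s i)) =
  \prod_(i < n) (if s i == i then 1 else c i).
Proof.
rewrite [RHS](reindex_inj (@perm_inj _ s)) /=; apply: eq_bigr => i _.
by rewrite (inj_eq perm_inj).
Qed.

Lemma prod_perm_offdiag (s : 'S_n) (M : 'M[R]_n) (u v : 'I_n -> R)
    (e : 'I_n -> 'I_n -> R) :
  (forall i j, i != j -> M i j = u i * e i j * v j) ->
  \prod_(i < n) M i (s i) =
  \prod_(i < n) (if s i == i then M i i else e i (s i))
  * \prod_(i < n) (if s i == i then 1 else u i * v i).
Proof.
move=> hM; transitivity (\prod_(i < n)
    ((if s i == i then M i i else e i (s i)) * (if s i == i then 1 else u i)
     * (if s i == i then 1 else v (s i)))).
  apply: eq_bigr => i _; have [->|si] := eqVneq (s i) i; first by rewrite !mulr1.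
  by rewrite hM 1?eq_sym // [u i * _]mulrC.
rewrite !big_split /= prod_perm_moved -mulrA -big_split /=; congr (_ * _).
by apply: eq_bigr => i _; case: ifP; rewrite ?mulr1.
Qed.

Lemma det_offdiag_swap (A B : 'M[R]_n) (a b : 'I_n -> R)
    (e : 'I_n -> 'I_n -> R) :
  (forall i, A i i = B i i) ->
  (forall i j, i != j -> A i j = a i * e i j * b j) ->
  (forall i j, i != j -> B i j = b i * e i j * a j) ->
  \det A = \det B.
Proof.
move=> hdiag hA hB; apply: eq_bigr => s _; congr (_ * _).
rewrite (prod_perm_offdiag s hA) (prod_perm_offdiag s hB).
congr (_ * _); apply: eq_bigr => i _; first by rewrite hdiag.
by rewrite mulrC.
Qed.

End OffdiagonalRescaling.

Lemma horner_deriv_prod_XsubC (R : comUnitRingType) (I : Type) (s : seq I)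
    (P : pred I) (c : I -> R) (x : R) :
  (forall l, P l -> (x - c l) \is a GRing.unit) ->
  (\prod_(l <- s | P l) ('X - (c l)%:P))^`().[x] =
  (\prod_(l <- s | P l) (x - c l)) * \sum_(l <- s | P l) (x - c l)^-1.
Proof.
move=> hu; elim: s => [|l s IH]; first by rewrite !big_nil derivC horner0 mulr0.
rewrite !big_cons; case: ifP => Pl //.
rewrite derivM derivXsubC mul1r hornerD hornerM IH hornerXsubC horner_prod.
under [X in X + _]eq_bigr do rewrite hornerXsubC.
by rewrite mulrDr mulrAC mulrV ?hu // mul1r mulrA.
Qed.

Section LagrangeBasis.
Variables (R : comUnitRingType) (n : nat) (xi : 'I_n -> R).
Hypothesis hxi : forall i j : 'I_n, i != j -> (xi i - xi j) \is a GRing.unit.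

Definition lagrange_denom (k : 'I_n) : R := \prod_(l < n | l != k) (xi k - xi l).

Definition lagrange_basis (k : 'I_n) : {poly R} :=
  (lagrange_denom k)^-1 *: \prod_(l < n | l != k) ('X - (xi l)%:P).

Lemma lagrange_denom_unit k : lagrange_denom k \is a GRing.unit.
Proof. by apply: unitr_prod => l; rewrite eq_sym; apply: hxi. Qed.

Lemma size_lagrange_basis k : (size (lagrange_basis k) <= n)%N.
Proof.
rewrite (leq_trans (size_scale_leq _ _)) // -big_filter size_prod_XsubC.
rewrite -rem_filter ?index_enum_uniq // size_rem ?mem_index_enum //.
by rewrite /index_enum unlock -enumT size_enum_ord; case: n k => [[]|].
Qed.

Lemma horner_lagrange_basis k l : (lagrange_basis k).[xi l] = (k == l)%:R.
Proof.
rewrite /lagrange_basis hornerZ horner_prod; have [<-|kl] := eqVneq k l.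
  by under eq_bigr do rewrite hornerXsubC; rewrite mulVr ?lagrange_denom_unit.
by rewrite (bigD1 l) 1?eq_sym //= hornerXsubC subrr mul0r mulr0.
Qed.

Lemma uniq_roots_nodes (s : seq 'I_n) : uniq s -> uniq_roots (map xi s).
Proof.
elim: s => //= k s IH /andP[ks us]; rewrite IH // andbT.
apply/allP => y /mapP[l ls ->]; rewrite /diff_roots mulrC eqxx /=.
by apply: hxi; apply: contraNneq ks => <-.
Qed.

Lemma lagrange_interpolation (q : {poly R}) :
  (size q <= n)%N -> q = \sum_(k < n) q.[xi k] *: lagrange_basis k.
Proof.
move=> sq; apply/eqP; rewrite -subr_eq0; apply/eqP; set D := _ - _.
have sD : (size D <= n)%N.
  rewrite (leq_trans (size_polyD _ _)) // geq_max size_polyN sq /=.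
  apply: (big_ind (fun q : {poly R} => size q <= n)%N) => [|q1 q2 h1 h2|k _].
  - by rewrite size_poly0.
  - by rewrite (leq_trans (size_polyD _ _)) // geq_max h1 h2.
  - by rewrite (leq_trans (size_scale_leq _ _)) // size_lagrange_basis.
have rootD : all (root D) (map xi (index_enum 'I_n)).
  apply/allP => _ /mapP[l _ ->]; rewrite /root hornerD hornerN horner_sum.
  rewrite (bigD1 l) //= big1 => [|k kl]; last first.
    by rewrite hornerZ horner_lagrange_basis (negPf kl) mulr0.
  by rewrite hornerZ horner_lagrange_basis eqxx mulr1 addr0 subrr.
apply: contraTeq sD => nzD; rewrite -ltnNge.
have := max_ring_poly_roots nzD rootD (uniq_roots_nodes (index_enum_uniq 'I_n)).
by rewrite size_map /index_enum unlock -enumT size_enum_ord.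
Qed.

Lemma horner_deriv_lagrange_basis_diag i :
  (lagrange_basis i)^`().[xi i] = \sum_(k < n | k != i) (xi i - xi k)^-1.
Proof.
rewrite /lagrange_basis derivZ hornerZ horner_deriv_prod_XsubC => [|l li].
  by rewrite mulrA mulVr ?lagrange_denom_unit ?mul1r.
by apply: hxi; rewrite eq_sym.
Qed.

Lemma horner_deriv_lagrange_basis k i : k != i ->
  (lagrange_basis k)^`().[xi i] =
  (xi i - xi k)^-1 * lagrange_denom i / lagrange_denom k.
Proof.
move=> ki; rewrite /lagrange_basis derivZ hornerZ (bigD1 i) 1?eq_sym //=.
rewrite derivM derivXsubC mul1r hornerD hornerM hornerXsubC subrr mul0r addr0.
have -> : lagrange_denom i =
    (xi i - xi k) * \prod_(l < n | (l != i) && (l != k)) (xi i - xi l).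
  by rewrite /lagrange_denom (bigD1 k) // eq_sym.
rewrite horner_prod mulrA mulVr ?hxi 1?eq_sym // mul1r mulrC.
congr (_ * _); apply: eq_big => [l|l _]; first by rewrite andbC.
by rewrite hornerXsubC.
Qed.

Lemma sum_deriv_lagrange_basis i (j : 'I_n) :
  \sum_(k < n) xi k ^+ j * (xi i * (lagrange_basis k)^`().[xi i])
  = j%:R * xi i ^+ j.
Proof.
have sXj : (size ('X^j : {poly R}) <= n)%N by rewrite size_polyXn.
have interp := lagrange_interpolation sXj.
have dXj : ('X^j)^`().[xi i] =
    \sum_(k < n) xi k ^+ j * (lagrange_basis k)^`().[xi i].
  rewrite [in LHS]interp raddf_sum horner_sum /=; apply: eq_bigr => k _.
  by rewrite derivZ hornerZ hornerXn.
under eq_bigr do rewrite mulrCA.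
rewrite -mulr_sumr -dXj derivXn hornerMn hornerXn mulrnAr -mulr_natl.
by case: (nat_of_ord j) => [|m]; rewrite ?mul0r //= exprS.
Qed.

End LagrangeBasis.

Section TwistedWronskian.
Variables (R : comUnitRingType) (n : nat) (eps : R) (xi p : 'I_n -> R).
Hypothesis hxi : forall i j : 'I_n, i != j -> (xi i - xi j) \is a GRing.unit.

Definition lagrange_Lax : 'M[R]_n := \matrix_(i, k)
  ((i == k)%:R * p i - eps * (xi i * (lagrange_basis xi k)^`().[xi i])).

Lemma lagrange_Lax_vdm i (j : 'I_n) :
  \sum_(k < n) lagrange_Lax i k * xi k ^+ j = (p i - eps * j%:R) * xi i ^+ j.
Proof.
under eq_bigr do rewrite mxE mulrBl.
rewrite sumrB (bigD1 i) //= eqxx mul1r big1 ?addr0 => [|k]; last first.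
  by rewrite eq_sym => /negPf ->; rewrite !mul0r.
rewrite mulrBl -mulrA -(sum_deriv_lagrange_basis hxi i) mulr_sumr.
by congr (_ - _); apply: eq_bigr => k _; ring.
Qed.

Lemma twWr_mx_factor :
  twWr_mx eps xi p = char_poly_mx lagrange_Lax *m map_mx polyC (vdm xi).
Proof.
apply/matrixP => i j; move: lagrange_Lax (lagrange_Lax_vdm i j) => M MV.
rewrite !mxE; under eq_bigr do rewrite !mxE mulrBl.
rewrite sumrB (bigD1 i) //= eqxx mulr1n big1 ?addr0 => [|k]; last first.
  by rewrite eq_sym => /negPf ->; rewrite mulr0n mul0r.
under eq_bigr do rewrite -rmorphM.
rewrite -rmorph_sum MV !rmorphM !rmorphB /= rmorphM /=; ring.
Qed.

Lemma det_vdm_unit : \det (vdm xi) \is a GRing.unit.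
Proof.
have -> : vdm xi = (Vandermonde n (\row_j xi j))^T.
  by apply/matrixP => i j; rewrite !mxE.
rewrite det_tr det_Vandermonde; apply: unitr_prod => i _.
apply: unitr_prod => j ij; rewrite !mxE; apply: hxi.
by rewrite -val_eqE /= gtn_eqF.
Qed.

Lemma twWr_char_poly : twWr eps xi p = char_poly lagrange_Lax.
Proof.
rewrite /twWr twWr_mx_factor det_mulmx det_map_mx /= -mul_polyC mulrCA.
by rewrite -polyCM mulVr ?det_vdm_unit // mulr1.
Qed.

Lemma char_poly_lagrange_Lax :
  char_poly lagrange_Lax = char_poly (tCM_Lax eps xi p).
Proof.
rewrite /char_poly -det_tr.
pose a i := (xi i * lagrange_denom xi i)%:P : {poly R}.
pose b i := (lagrange_denom xi i)^-1%:P : {poly R}.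
pose e i j := (eps / (xi j - xi i))%:P : {poly R}.
apply: (@det_offdiag_swap _ _ _ _ b a e) => [i|i j ij|i j ij]; rewrite !mxE.
- by rewrite eqxx mul1r horner_deriv_lagrange_basis_diag // mulrA.
- rewrite eq_sym (negPf ij) mulr0n mul0r !sub0r rmorphN opprK.
  rewrite horner_deriv_lagrange_basis // -!rmorphM; congr (_%:P); ring.
- rewrite (negPf ij) mulr0n sub0r -rmorphN -!rmorphM; congr (_%:P).
  rewrite -/(lagrange_denom xi i) -/(lagrange_denom xi j).
  by rewrite -[xi j - xi i]opprB invrN; ring.
Qed.

End TwistedWronskian.

Unset Implicit Arguments.

Theorem mainTheorem1 (R : comUnitRingType) (r : nat) (hr : (1 <= r)%N)
    (eps : R) (xi p a : 'I_r.+1 -> R)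
    (hxi : forall i j : 'I_r.+1, i != j -> (xi i - xi j) \is a GRing.unit) :
  forall x : R,
    in_ideal (Wr_rel eps xi p a) r.+2 x <-> in_ideal (tCM_rel eps xi p a) r.+2 x.
Proof.
move=> x.
have same_poly : twWr eps xi p = char_poly (tCM_Lax eps xi p).
  by rewrite (twWr_char_poly eps p hxi) char_poly_lagrange_Lax.
by rewrite /Wr_rel /tCM_rel same_poly.
Qed.
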